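(* Let $(X,d)$ be a length space and $\Gamma$ a group acting properly by isometries on $X$ such that $\Gamma\backslash X$ is compact with diameter at most $D$. Suppose there exist $x_0\in X$, $C_0>1$ and $R_0>D$ such that for every $r\in[R_0/2,2R_0]$ one has $0<\mu_{x_0}^\Gamma(B(x_0,r))<\infty$ and $\mu_{x_0}^\Gamma(B(x_0,2r))\le C_0\,\mu_{x_0}^\Gamma(B(x_0,r))$. Then: (i) for every $R_1\ge R_0$ and every $r\in[R_1/2,2R_1]$, $\mu_{x_0}^\Gamma(B(x_0,2r))\le C_0^{3(1+[2R_1/R_0])}\mu_{x_0}^\Gamma(B(x_0,r))$; (ii) $\operatorname{Ent}(X,d)\le\frac{3}{R_0}\ln C_0$.
   Context: A length space: any two points are joined by a continuous path and $d$ is the infimum of lengths of such paths. Proper action: $\{\gamma:d(x,\gamma x)\le R\}$ finite. $\mu_{x_0}^\Gamma=\sum_{\gamma\in\Gamma}\delta_{\gamma x_0}$ is the counting measure of the orbit, so $\mu_{x_0}^\Gamma(B(x_0,r))=\#\{\gamma: d(x_0,\gamma x_0)<r\}$; $B(x,r)$ is the open ball. Quotient distance $\bar d(\Gamma x,\Gamma y)=\inf_\gamma d(x,\gamma y)$. $\operatorname{Ent}(X,d)=\liminf_R\frac1R\ln\mu_{x_0}^\Gamma(B(x_0,R))$. $[t]$ is the integer part. *)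

From Stdlib Require Import Reals Lra ZArith List ClassicalEpsilon.
Open Scope R_scope.

Record IsMetric {X : Type} (d : X -> X -> R) : Prop := {
  metric_eq0 : forall x y, d x y = 0 <-> x = y;
  metric_sym : forall x y, d x y = d y x;
  metric_tri : forall x y z, d x z <= d x y + d y z
}.

Fixpoint psum (f : nat -> R) (n : nat) : R :=
  match n with O => 0 | S k => psum f k + f k end.

Definition path_continuous {X : Type} (d : X -> X -> R) (c : R -> X) : Prop :=
  forall t, 0 <= t <= 1 -> forall eps, eps > 0 ->
    exists delta, delta > 0 /\
      forall s, 0 <= s <= 1 -> Rabs (s - t) < delta -> d (c s) (c t) < eps.

(* length(c) <= L, where length = sup over partitions 0 = t_0 <= ... <= t_n = 1
   of sum_i d(c t_i, c t_{i+1}). *)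
Definition path_length_le {X : Type} (d : X -> X -> R) (c : R -> X) (L : R) : Prop :=
  forall (t : nat -> R) (n : nat),
    t O = 0 -> t n = 1 -> (forall i, (i < n)%nat -> t i <= t (S i)) ->
    psum (fun i => d (c (t i)) (c (t (S i)))) n <= L.

(* Length space: any two points are joined by a continuous path and d is the
   infimum of the lengths of such paths (d <= length always holds by the
   triangle inequality, so only the "inf <= d" half needs stating). *)
Definition LengthSpace {X : Type} (d : X -> X -> R) : Prop :=
  IsMetric d /\
  forall x y : X,
    (exists c, path_continuous d c /\ c 0 = x /\ c 1 = y) /\
    (forall eps, eps > 0 ->
      exists c, path_continuous d c /\ c 0 = x /\ c 1 = y /\
                path_length_le d c (d x y + eps)).

Record IsometricGroupAction {G X : Type} (mul : G -> G -> G) (inv : G -> G)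
    (e : G) (act : G -> X -> X) (d : X -> X -> R) : Prop := {
  grp_assoc : forall a b c, mul a (mul b c) = mul (mul a b) c;
  grp_idl : forall a, mul e a = a;
  grp_idr : forall a, mul a e = a;
  grp_invl : forall a, mul (inv a) a = e;
  grp_invr : forall a, mul a (inv a) = e;
  act_id : forall x, act e x = x;
  act_mul : forall a b x, act (mul a b) x = act a (act b x);
  act_isom : forall a x y, d (act a x) (act a y) = d x y
}.

Definition ProperAction {G X : Type} (act : G -> X -> X) (d : X -> X -> R) : Prop :=
  forall (x : X) (Rr : R), exists l : list G,
    forall g, d x (act g x) <= Rr -> In g l.

(* Quotient distance dbar(Gx, Gy) = inf_g d(x, g y).
   dbar(Gx,Gy) < eps  <->  exists g, d(x, g y) < eps. *)
Definition QuotientDiamLe {G X : Type} (act : G -> X -> X) (d : X -> X -> R) (D : R) : Prop :=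
  forall x y : X, forall eps, eps > 0 -> exists g, d x (act g y) <= D + eps.

(* Compactness of the quotient metric space (Gamma\X, dbar), stated as
   sequential compactness: every sequence of orbits has a subsequence
   converging in dbar. *)
Definition QuotientCompact {G X : Type} (act : G -> X -> X) (d : X -> X -> R) : Prop :=
  forall u : nat -> X, exists (y : X) (phi : nat -> nat),
    (forall n, (phi n < phi (S n))%nat) /\
    forall eps, eps > 0 -> exists N, forall n, (n >= N)%nat ->
      exists g, d (u (phi n)) (act g y) < eps.

Definition HasCard {G : Type} (P : G -> Prop) (n : nat) : Prop :=
  exists l : list G, NoDup l /\ length l = n /\ forall g, In g l <-> P g.

(* mu_{x0}^Gamma(B(x0,r)) = #{g | d(x0, g x0) < r}  (the cardinality when this
   set is finite, which is always the case for a proper action). *)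
Definition orbit_ball_count {G X : Type} (act : G -> X -> X) (d : X -> X -> R)
    (x0 : X) (r : R) : nat :=
  epsilon (inhabits O) (fun n => HasCard (fun g => d x0 (act g x0) < r) n).

Definition orbit_ball_finite {G X : Type} (act : G -> X -> X) (d : X -> X -> R)
    (x0 : X) (r : R) : Prop :=
  exists n, HasCard (fun g => d x0 (act g x0) < r) n.

(* liminf_{R -> +oo} f R <= L  (literal unfolding of sup_M inf_{R>M} f R <= L). *)
Definition liminf_infty_le (f : R -> R) (L : R) : Prop :=
  forall eps, eps > 0 -> forall M, exists Rr, Rr > M /\ f Rr <= L + eps.

Definition Ent_le {G X : Type} (act : G -> X -> X) (d : X -> X -> R) (x0 : X) (L : R) : Prop :=
  liminf_infty_le (fun Rr => / Rr * ln (INR (orbit_ball_count act d x0 Rr))) L.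

(* Write |g| = d(x0, g x0) and N(r) = #{g | |g| < r}.  Since X is a length space and the
   quotient has diameter at most D, every w with |w| + 2D < q + s factors as w = g h with
   |g| < q and |h| < s: walk from x0 towards w x0 up to distance about q - D and jump to a
   nearby orbit point.  A Ruzsa-type injection then gives N(rho) N(a) <= N(q + rho) N(s + rho),
   and with rho = R0/2, q = 7R0/2 and N(4R0) <= C0^3 N(R0/2) (three doublings) this yields
   N(r + R0) <= C0^3 N(r) for all r >= R0/2.  Iterating, N(r + n R0) <= C0^(3n) N(r), which
   gives both the doubling bound at every scale R1 >= R0 and the entropy bound. *)

From Stdlib Require Import Reals ZArith Lra Lia List ClassicalEpsilon FinFun.
Open Scope R_scope.

Local Arguments metric_eq0 {X d}.
Local Arguments metric_sym {X d}.
Local Arguments metric_tri {X d}.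
Local Arguments grp_assoc {G X mul inv e act d}.
Local Arguments grp_idl {G X mul inv e act d}.
Local Arguments grp_idr {G X mul inv e act d}.
Local Arguments grp_invl {G X mul inv e act d}.
Local Arguments grp_invr {G X mul inv e act d}.
Local Arguments act_id {G X mul inv e act d}.
Local Arguments act_mul {G X mul inv e act d}.
Local Arguments act_isom {G X mul inv e act d}.

Section Counting.
Variable A : Type.

Lemma HasCard_of_incl_list (P : A -> Prop) (l : list A) :
  (forall a, P a -> In a l) -> exists n, HasCard P n.
Proof.
  intro HPl.
  set (dec := fun a b : A => excluded_middle_informative (a = b)).
  set (lP := nodup dec (filter (fun a => if excluded_middle_informative (P a) then true else false) l)).
  exists (length lP), lP; split; [apply NoDup_nodup | split; [reflexivity |]].
  intro a; unfold lP; rewrite nodup_In, filter_In.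
  destruct (excluded_middle_informative (P a)); split; intuition (auto || discriminate).
Qed.

Lemma HasCard_le_inj (B : Type) (P : A -> Prop) (Q : B -> Prop) (f : A -> B) n m :
  (forall a, P a -> Q (f a)) ->
  (forall a a', P a -> P a' -> f a = f a' -> a = a') ->
  HasCard P n -> HasCard Q m -> (n <= m)%nat.
Proof.
  intros HPQ Hinj [l [Hl [<- HlP]]] [k [Hk [<- HkQ]]].
  rewrite <- (length_map f l).
  apply NoDup_incl_length.
  - apply Injective_map_NoDup_in; [| exact Hl].
    intros a a' Ha Ha'; apply Hinj; apply HlP; assumption.
  - intros b Hb; apply in_map_iff in Hb as [a [<- Ha]].
    apply HkQ, HPQ, HlP, Ha.
Qed.

Lemma HasCard_le (P Q : A -> Prop) n m :
  (forall a, P a -> Q a) -> HasCard P n -> HasCard Q m -> (n <= m)%nat.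
Proof. intro HPQ; apply (HasCard_le_inj _ P Q (fun a => a)); auto. Qed.

Lemma NoDup_list_prod (B : Type) (l : list A) (k : list B) :
  NoDup l -> NoDup k -> NoDup (list_prod l k).
Proof.
  intros Hl Hk; induction Hl as [|a l Ha Hl IH]; simpl; [constructor |].
  apply NoDup_app; [| exact IH |].
  - apply Injective_map_NoDup; [| exact Hk].
    intros b b' Hb; injection Hb; auto.
  - intros [a' b] Hab Hin.
    apply in_map_iff in Hab as [b' [Hb' _]]; injection Hb' as <- _.
    apply in_prod_iff in Hin as [Hin _]; contradiction.
Qed.

Lemma HasCard_prod (B : Type) (P : A -> Prop) (Q : B -> Prop) n m :
  HasCard P n -> HasCard Q m -> HasCard (fun p => P (fst p) /\ Q (snd p)) (n * m).
Proof.
  intros [l [Hl [<- HlP]]] [k [Hk [<- HkQ]]].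
  exists (list_prod l k); split; [apply NoDup_list_prod; assumption |].
  split; [apply length_prod |].
  intros [a b]; rewrite in_prod_iff, HlP, HkQ; reflexivity.
Qed.

End Counting.

(* Paths are only parametrized by [0,1]; precomposing with [clamp01] makes them continuous
   on all of R, as [IVT_cor] requires. *)
Definition clamp01 (u : R) : R := Rmax 0 (Rmin 1 u).

Lemma clamp01_range u : 0 <= clamp01 u <= 1.
Proof. unfold clamp01, Rmax, Rmin; repeat destruct Rle_dec; lra. Qed.

Lemma clamp01_id u : 0 <= u <= 1 -> clamp01 u = u.
Proof. intro; unfold clamp01, Rmax, Rmin; repeat destruct Rle_dec; lra. Qed.

Lemma clamp01_lipschitz u v : Rabs (clamp01 u - clamp01 v) <= Rabs (u - v).
Proof.
  unfold clamp01, Rmax, Rmin; repeat destruct Rle_dec;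
    unfold Rabs; repeat destruct Rcase_abs; lra.
Qed.

Section MetricSpace.
Variables (X : Type) (d : X -> X -> R).
Hypothesis HM : IsMetric d.

Lemma metric_refl x : d x x = 0.
Proof. apply (metric_eq0 HM); reflexivity. Qed.

Lemma metric_nonneg x y : 0 <= d x y.
Proof.
  pose proof (metric_tri HM x y x) as Htri.
  rewrite metric_refl, (metric_sym HM y x) in Htri; lra.
Qed.

Lemma metric_lipschitz y a b : Rabs (d y a - d y b) <= d a b.
Proof.
  pose proof (metric_tri HM y a b); pose proof (metric_tri HM y b a).
  rewrite (metric_sym HM b a) in *.
  unfold Rabs; destruct Rcase_abs; lra.
Qed.

Lemma continuity_dist_path (c : R -> X) y :
  path_continuous d c -> continuity (fun u => d y (c (clamp01 u))).
Proof.
  intros Hc v eps Heps.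
  destruct (Hc (clamp01 v) (clamp01_range v) eps Heps) as [delta [Hdelta Hd]].
  exists delta; split; [exact Hdelta |].
  intros u [_ Hu]; simpl in *; unfold R_dist in *.
  eapply Rle_lt_trans; [apply metric_lipschitz |].
  apply Hd; [apply clamp01_range |].
  eapply Rle_lt_trans; [apply clamp01_lipschitz | exact Hu].
Qed.

Lemma LengthSpace_point_at_dist x y t eps :
  LengthSpace d -> 0 <= t <= d x y -> 0 < eps ->
  exists p, d x p = t /\ d x p + d p y <= d x y + eps.
Proof.
  intros [_ HL] Ht Heps.
  destruct (proj2 (HL x y) eps Heps) as [c [Hc [Hc0 [Hc1 Hlen]]]].
  destruct (IVT_cor (fun u => d x (c (clamp01 u)) - t) 0 1) as [z [Hz Hfz]].
  - apply continuity_minus; [apply continuity_dist_path, Hc | apply continuity_const; now intros].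
  - lra.
  - rewrite !clamp01_id, Hc0, Hc1, metric_refl by lra; nra.
  - rewrite clamp01_id in Hfz by lra.
    exists (c z); split; [lra |].
    specialize (Hlen (fun i => match i with O => 0 | 1%nat => z | _ => 1 end) 2%nat
      eq_refl eq_refl).
    simpl in Hlen; rewrite Hc0, Hc1 in Hlen.
    enough (0 + d x (c z) + d (c z) y <= d x y + eps) by lra.
    apply Hlen; intros [|[|i]] Hi; simpl; lra || lia.
Qed.

End MetricSpace.

Lemma ln_le x y : 0 < x -> x <= y -> ln x <= ln y.
Proof.
  intros Hx [Hxy | <-]; [left; apply ln_increasing |]; lra.
Qed.

Lemma Int_part_succ_mul_gt x h :
  0 < h -> 0 <= x -> x < INR (1 + Z.to_nat (Int_part (x / h))) * h.
Proof.
  intros Hh Hx.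
  destruct (base_Int_part (x / h)) as [Hlow Hup].
  assert (Hxh : 0 <= x / h) by (apply Rmult_le_pos; [lra | left; apply Rinv_0_lt_compat; lra]).
  assert (Hz : (0 <= Int_part (x / h))%Z).
  { enough (-1 < Int_part (x / h))%Z by lia; apply lt_IZR; simpl; lra. }
  rewrite plus_INR, (INR_IZR_INZ (Z.to_nat _)), Z2Nat.id by exact Hz.
  replace x with (x / h * h) at 1 by (field; lra).
  apply Rmult_lt_compat_r; simpl; lra.
Qed.

Lemma exists_nat_mul_gt x h : 0 < h -> exists n, x < INR n * h.
Proof.
  intro Hh; destruct (INR_unbounded (x / h)) as [n Hn]; exists n.
  replace x with (x / h * h) by (field; lra).
  apply Rmult_lt_compat_r; lra.
Qed.

Lemma liminf_infty_le_of_arith_bound (f : R -> R) r0 h a K :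
  0 < r0 -> 0 < h -> 0 <= a -> 0 <= K ->
  (forall n, (r0 + INR n * h) * f (r0 + INR n * h) <= a * INR n + K) ->
  liminf_infty_le f (a / h).
Proof.
  intros Hr0 Hh Ha HK Hf eps Heps M.
  destruct (exists_nat_mul_gt (Rmax M (K / eps)) h Hh) as [n Hn].
  assert (HnM := Rle_lt_trans _ _ _ (Rmax_l M (K / eps)) Hn).
  assert (HnK := Rle_lt_trans _ _ _ (Rmax_r M (K / eps)) Hn).
  assert (HK' : K < eps * (INR n * h)).
  { replace K with (K / eps * eps) by (field; lra); nra. }
  pose proof (pos_INR n).
  exists (r0 + INR n * h); split; [nra |].
  apply (Rmult_le_reg_l (r0 + INR n * h)); [nra |].
  eapply Rle_trans; [apply Hf |].
  replace ((r0 + INR n * h) * (a / h + eps))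
    with (a / h * r0 + a * INR n + eps * (r0 + INR n * h)) by (field; lra).
  assert (0 <= a / h) by (apply Rmult_le_pos; [lra | left; apply Rinv_0_lt_compat; lra]).
  nra.
Qed.

Section OrbitGeometry.
Context {X G : Type} (d : X -> X -> R)
  (mul : G -> G -> G) (inv : G -> G) (e : G) (act : G -> X -> X) (x0 : X).
Hypothesis HM : IsMetric d.
Hypothesis HG : IsometricGroupAction mul inv e act d.

Definition orbit_norm (g : G) : R := d x0 (act g x0).

Lemma orbit_norm_e : orbit_norm e = 0.
Proof. unfold orbit_norm; rewrite (act_id HG); apply metric_refl, HM. Qed.

Lemma orbit_norm_mul g h : orbit_norm (mul g h) <= orbit_norm g + orbit_norm h.
Proof.
  unfold orbit_norm; rewrite (act_mul HG), <- (act_isom HG g x0 (act h x0)).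
  apply (metric_tri HM).
Qed.

Lemma orbit_norm_inv g : orbit_norm (inv g) = orbit_norm g.
Proof.
  unfold orbit_norm; rewrite <- (act_isom HG g x0 (act (inv g) x0)).
  rewrite <- (act_mul HG), (grp_invr HG), (act_id HG); apply (metric_sym HM).
Qed.

Lemma dist_act_orbit g h : d (act g x0) (act h x0) = orbit_norm (mul (inv g) h).
Proof.
  unfold orbit_norm; rewrite <- (act_isom HG (inv g)), <- !(act_mul HG), (grp_invl HG).
  rewrite (act_id HG); reflexivity.
Qed.

Lemma mul_inv_cancel_l g h : mul g (mul (inv g) h) = h.
Proof. rewrite (grp_assoc HG), (grp_invr HG); apply (grp_idl HG). Qed.

Lemma inv_mul_cancel_l g h : mul (inv g) (mul g h) = h.
Proof. rewrite (grp_assoc HG), (grp_invl HG); apply (grp_idl HG). Qed.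

Lemma mul_inj_l g h h' : mul g h = mul g h' -> h = h'.
Proof.
  intro Hgh; rewrite <- (inv_mul_cancel_l g h), <- (inv_mul_cancel_l g h'), Hgh.
  reflexivity.
Qed.

Lemma QuotientDiamLe_nonneg D : QuotientDiamLe act d D -> 0 <= D.
Proof.
  intro HQ; apply Rnot_lt_le; intro HD.
  destruct (HQ x0 x0 (- D / 2)) as [g Hg]; [lra |].
  pose proof (metric_nonneg _ d HM x0 (act g x0)); lra.
Qed.

Lemma orbit_norm_split D q s g0 :
  LengthSpace d -> QuotientDiamLe act d D ->
  0 < s -> D < q -> orbit_norm g0 + 2 * D < q + s ->
  exists g h, g0 = mul g h /\ orbit_norm g < q /\ orbit_norm h < s.
Proof.
  intros HL HQ Hs Hq Hsum.
  pose proof (QuotientDiamLe_nonneg D HQ).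
  destruct (Rlt_dec (orbit_norm g0) q) as [Hg0 | Hg0].
  { exists g0, e; rewrite (grp_idr HG), orbit_norm_e; auto. }
  apply Rnot_lt_le in Hg0.
  set (delta := Rmin ((q + s - 2 * D - orbit_norm g0) / 4) ((q - D) / 2)).
  assert (Hdelta : 0 < delta /\ delta <= (q + s - 2 * D - orbit_norm g0) / 4 /\ delta <= (q - D) / 2)
    by (unfold delta, Rmin; destruct Rle_dec; lra).
  destruct (LengthSpace_point_at_dist _ d HM x0 (act g0 x0) (q - D - delta) delta HL)
    as [p [Hp Hpg0]]; [unfold orbit_norm in Hg0; lra | apply Hdelta |].
  destruct (HQ p x0 (delta / 2)) as [g Hg]; [lra |].
  exists g, (mul (inv g) g0); split; [symmetry; apply mul_inv_cancel_l |].
  pose proof (metric_tri HM x0 p (act g x0)).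
  pose proof (metric_tri HM (act g x0) p (act g0 x0)).
  rewrite (metric_sym HM (act g x0) p), dist_act_orbit in *.
  fold (orbit_norm g0) (orbit_norm g) in *; split; lra.
Qed.

Hypothesis HP : ProperAction act d.

Local Notation N := (orbit_ball_count act d x0).

Lemma orbit_ball_countP r : HasCard (fun g => orbit_norm g < r) (N r).
Proof.
  unfold orbit_ball_count; apply epsilon_spec; destruct (HP x0 r) as [l Hl].
  apply (HasCard_of_incl_list _ _ l); intros g Hg; apply Hl; unfold orbit_norm in Hg; lra.
Qed.

Lemma orbit_ball_count_mono r r' : r <= r' -> (N r <= N r')%nat.
Proof.
  intro Hr; apply (HasCard_le _ (fun g => orbit_norm g < r) (fun g => orbit_norm g < r'));
    [intros; lra | apply orbit_ball_countP ..].
Qed.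

Lemma orbit_ball_count_pos r : 0 < r -> 1 <= INR (N r).
Proof.
  intro Hr; apply (le_INR 1).
  apply (HasCard_le _ (fun g => g = e) (fun g => orbit_norm g < r)).
  - intros g ->; rewrite orbit_norm_e; assumption.
  - exists (e :: nil); split; [constructor; [intros [] | constructor] |].
    split; [reflexivity | simpl; intuition].
  - apply orbit_ball_countP.
Qed.

(* Ruzsa's triangle inequality: [(x, w) |-> (g_w x, x^-1 h_w)], where [w = g_w h_w] is
   the given splitting, is injective because the product of its two components is [w]. *)
Lemma orbit_ball_count_Ruzsa a q s rho :
  (forall w, orbit_norm w < a -> exists g h, w = mul g h /\ orbit_norm g < q /\ orbit_norm h < s) ->
  (N rho * N a <= N (q + rho) * N (s + rho))%nat.
Proof.
  intro Hsplit.
  set (left_factor := fun w => epsilon (inhabits e)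
    (fun g => exists h, w = mul g h /\ orbit_norm g < q /\ orbit_norm h < s)).
  set (F := fun p : G * G =>
    (mul (left_factor (snd p)) (fst p), mul (inv (fst p)) (mul (inv (left_factor (snd p))) (snd p)))).
  assert (HF : forall p, mul (fst (F p)) (snd (F p)) = snd p).
  { intros [x w]; simpl.
    rewrite <- (grp_assoc HG), mul_inv_cancel_l, mul_inv_cancel_l.
    reflexivity. }
  apply (HasCard_le_inj _ _ (fun p => orbit_norm (fst p) < rho /\ orbit_norm (snd p) < a)
    (fun p => orbit_norm (fst p) < q + rho /\ orbit_norm (snd p) < s + rho) F);
    [| | apply (HasCard_prod _ _ (fun g => orbit_norm g < rho) (fun g => orbit_norm g < a))
       | apply (HasCard_prod _ _ (fun g => orbit_norm g < q + rho) (fun g => orbit_norm g < s + rho))];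
    try apply orbit_ball_countP.
  - intros [x w] [Hx Hw]; simpl in *.
    assert (Hg : exists h, w = mul (left_factor w) h /\ orbit_norm (left_factor w) < q /\ orbit_norm h < s).
    { apply epsilon_spec; destruct (Hsplit w Hw) as [g [h Hgh]]; eauto. }
    destruct Hg as [h [Hw' [Hg Hh]]].
    set (g := left_factor w) in *; rewrite Hw', inv_mul_cancel_l.
    pose proof (orbit_norm_mul g x).
    pose proof (orbit_norm_mul (inv x) h).
    rewrite orbit_norm_inv in *.
    split; lra.
  - intros [x w] [x' w'] _ _ Heq.
    assert (w = w') as <-.
    { pose proof (HF (x, w)) as Hw; pose proof (HF (x', w')) as Hw'.
      rewrite Heq in Hw; exact (eq_trans (eq_sym Hw) Hw'). }
    injection Heq as Hx _; apply mul_inj_l in Hx; subst; reflexivity.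
Qed.

Section Doubling.
Variables (D C0 R0 : R).
Hypothesis HL : LengthSpace d.
Hypothesis HQ : QuotientDiamLe act d D.
Hypothesis HC0 : 1 <= C0.
Hypothesis HR0 : D < R0.
Hypothesis Hdoubling : forall r, R0 / 2 <= r <= 2 * R0 -> INR (N (2 * r)) <= C0 * INR (N r).

Let HR0_pos : 0 < R0.
Proof. pose proof (QuotientDiamLe_nonneg D HQ); lra. Qed.

Lemma orbit_ball_count_4R0 : INR (N (4 * R0)) <= C0 ^ 3 * INR (N (R0 / 2)).
Proof.
  pose proof (Hdoubling (R0 / 2)) as H1; pose proof (Hdoubling R0) as H2;
  pose proof (Hdoubling (2 * R0)) as H3.
  replace (2 * (R0 / 2)) with R0 in H1 by field.
  replace (2 * (2 * R0)) with (4 * R0) in H3 by ring.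
  pose proof (pos_INR (N (R0 / 2))).
  pose proof (pos_INR (N R0)).
  simpl; nra.
Qed.

Lemma orbit_ball_count_add_R0 r : R0 / 2 <= r -> INR (N (r + R0)) <= C0 ^ 3 * INR (N r).
Proof.
  intro Hr.
  pose proof (QuotientDiamLe_nonneg D HQ).
  pose proof orbit_ball_count_4R0; pose proof HR0_pos.
  destruct (Req_dec r (R0 / 2)) as [-> | Hr'].
  { apply Rle_trans with (INR (N (4 * R0))); [apply le_INR, orbit_ball_count_mono; lra |].
    assumption. }
  assert (Hruzsa : (N (R0 / 2) * N (r + R0)
      <= N (7 * R0 / 2 + R0 / 2) * N (r - R0 / 2 + R0 / 2))%nat).
  { apply orbit_ball_count_Ruzsa; auto; intros w Hw.
    apply (orbit_norm_split D); auto; lra. }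
  replace (7 * R0 / 2 + R0 / 2) with (4 * R0) in Hruzsa by field.
  replace (r - R0 / 2 + R0 / 2) with r in Hruzsa by ring.
  apply le_INR in Hruzsa; rewrite !mult_INR in Hruzsa.
  pose proof (orbit_ball_count_pos (R0 / 2)).
  pose proof (pos_INR (N r)).
  apply (Rmult_le_reg_l (INR (N (R0 / 2)))); nra.
Qed.

Lemma orbit_ball_count_add_mul_R0 n r :
  R0 / 2 <= r -> INR (N (r + INR n * R0)) <= C0 ^ (3 * n) * INR (N r).
Proof.
  intro Hr; pose proof HR0_pos; induction n as [| n IH].
  - simpl; rewrite Rmult_0_l, Rplus_0_r; lra.
  - rewrite S_INR, Nat.mul_succ_r, Nat.add_comm, pow_add.
    replace (r + (INR n + 1) * R0) with (r + INR n * R0 + R0) by ring.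
    pose proof (pos_INR n).
    eapply Rle_trans; [apply orbit_ball_count_add_R0; nra |].
    rewrite Rmult_assoc; apply Rmult_le_compat_l; [apply pow_le |]; lra.
Qed.

Lemma orbit_ball_count_doubling_large R1 r :
  R1 >= R0 -> R1 / 2 <= r <= 2 * R1 ->
  INR (N (2 * r)) <= C0 ^ (3 * (1 + Z.to_nat (Int_part (2 * R1 / R0)))) * INR (N r).
Proof.
  intros HR1 Hr; pose proof HR0_pos.
  pose proof (Int_part_succ_mul_gt (2 * R1) R0 HR0_pos ltac:(lra)).
  eapply Rle_trans; [| apply orbit_ball_count_add_mul_R0; lra].
  apply le_INR, orbit_ball_count_mono; lra.
Qed.

Lemma orbit_ball_count_Ent_le : Ent_le act d x0 (3 / R0 * ln C0).
Proof.
  pose proof HR0_pos.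
  replace (3 / R0 * ln C0) with (3 * ln C0 / R0) by (field; lra).
  assert (HN0 := orbit_ball_count_pos (R0 / 2) ltac:(lra)).
  apply (liminf_infty_le_of_arith_bound _ (R0 / 2) R0 (3 * ln C0) (ln (INR (N (R0 / 2)))));
    [lra | lra | | rewrite <- ln_1; apply ln_le; lra |].
  { assert (0 <= ln C0) by (rewrite <- ln_1; apply ln_le; lra); lra. }
  intro n; pose proof (pos_INR n).
  assert (Ht : 0 < R0 / 2 + INR n * R0) by nra.
  rewrite <- Rmult_assoc, Rinv_r, Rmult_1_l by lra.
  pose proof (orbit_ball_count_pos _ Ht).
  eapply Rle_trans; [apply ln_le; [lra | apply orbit_ball_count_add_mul_R0; lra] |].
  rewrite ln_mult, ln_pow, mult_INR by (try apply pow_lt; lra).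
  simpl INR; lra.
Qed.

End Doubling.

End OrbitGeometry.

Theorem lemma3p9 (X G : Type) (d : X -> X -> R)
  (mul : G -> G -> G) (inv : G -> G) (e : G) (act : G -> X -> X)
  (D : R) (x0 : X) (C0 R0 : R) :
  LengthSpace d ->
  IsometricGroupAction mul inv e act d ->
  ProperAction act d ->
  QuotientCompact act d ->
  QuotientDiamLe act d D ->
  C0 > 1 -> R0 > D ->
  (forall r, R0 / 2 <= r <= 2 * R0 ->
     orbit_ball_finite act d x0 r /\
     0 < INR (orbit_ball_count act d x0 r) /\
     orbit_ball_finite act d x0 (2 * r) /\
     INR (orbit_ball_count act d x0 (2 * r))
       <= C0 * INR (orbit_ball_count act d x0 r)) ->
  (forall R1, R1 >= R0 -> forall r, R1 / 2 <= r <= 2 * R1 ->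
     INR (orbit_ball_count act d x0 (2 * r))
       <= C0 ^ (3 * (1 + Z.to_nat (Int_part (2 * R1 / R0))))
          * INR (orbit_ball_count act d x0 r))
  /\ Ent_le act d x0 (3 / R0 * ln C0).
Proof.
  (* Compactness of the quotient is used only through its diameter bound. *)
  intros HL HG HP _ HQ HC0 HR0 Hdb.
  assert (HM : IsMetric d) by apply HL.
  assert (Hdoubling : forall r, R0 / 2 <= r <= 2 * R0 ->
    INR (orbit_ball_count act d x0 (2 * r)) <= C0 * INR (orbit_ball_count act d x0 r))
    by (intros r Hr; apply Hdb, Hr).
  split.
  - intros R1 HR1 r Hr.
    apply (orbit_ball_count_doubling_large d mul inv e act x0 HM HG HP D C0 R0); auto; lra.
  - apply (orbit_ball_count_Ent_le d mul inv e act x0 HM HG HP D C0 R0); auto; lra.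
Qed.
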